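(* Let $G, H$ be finite groups, and consider the bijective Version I pebble game on $(G,H)$. Suppose that at some round Duplicator selects a bijection $f : G \to H$ such that $|C_{G}(x)| \neq |C_{H}(f(x))|$ for some $x \in G$. Then Spoiler can win using $3$ pebble pairs within $3$ rounds.
   Context: $C_G(x)$ denotes the centralizer of $x$ in $G$. Bijective Version I pebble game on finite groups $G,H$: if $|G|\ne|H|$ Spoiler wins at once. Each round: Spoiler picks up a pebble pair $(p_i,p_i')$; the winning condition is checked; Duplicator chooses a bijection $f:G\to H$; Spoiler places $p_i$ on some $g\in G$ and $p_i'$ is placed on $f(g)$. Spoiler wins when, with $g_1,\ldots,g_\ell\in G$ and $h_1,\ldots,h_\ell \in H$ the corresponding pebbled elements, the map $g_i\mapsto h_i$ is not a marked equivalence, i.e. it is not the case that for all $i,j,t$: $g_i=g_j\iff h_i=h_j$ and $g_ig_j=g_t\iff h_ih_j=h_t$. *)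

From mathcomp Require Import all_boot all_fingroup.
Set Implicit Arguments. Unset Strict Implicit. Unset Printing Implicit Defensive.

(* Finite groups G, H are modelled as finGroupTypes gT, hT (the whole type is
   the group).  A board with k pebble pairs p_0..p_{k-1}: pebble pair j is
   either off the board (None) or placed on (g_j, h_j) (Some (g_j, h_j)). *)
Definition config (gT hT : finGroupType) (k : nat) := 'I_k -> option (gT * hT).

Definition marked_equiv (gT hT : finGroupType) (k : nat) (c : config gT hT k) : Prop :=
  forall (i j t : 'I_k) (a b d : gT * hT),
    c i = Some a -> c j = Some b -> c t = Some d ->
    (a.1 = b.1 <-> a.2 = b.2) /\
    ((a.1 * b.1)%g = d.1 <-> (a.2 * b.2)%g = d.2).

Definition place (gT hT : finGroupType) (k : nat) (c : config gT hT k)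
  (i : 'I_k) (p : gT * hT) : config gT hT k :=
  fun j => if j == i then Some p else c j.

(* spoiler_wins r c : from board c (just after a placement), Spoiler can force
   a win within r further rounds of the bijective Version I game. *)
Fixpoint spoiler_wins (gT hT : finGroupType) (k : nat) (r : nat)
  (c : config gT hT k) : Prop :=
  ~ marked_equiv c \/
  match r with
  | 0 => False
  | r'.+1 =>
      exists i : 'I_k, forall f : gT -> hT, bijective f ->
        exists g : gT, spoiler_wins r' (place c i (g, f g))
  end.

From mathcomp Require Import all_boot all_fingroup.

Set Implicit Arguments.
Unset Strict Implicit.
Unset Printing Implicit Defensive.

Local Open Scope group_scope.

(* Spoiler pebbles x, then (against Duplicator's next bijection f') an element
   g on which f' breaks commutation with x -- such a g exists because a
   bijection preserving commutation with x would match 'C[x] with 'C[f x].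
   Finally Spoiler pebbles x * g: its image has to be both f x * f' g and,
   exactly when g commutes with x, f' g * f x, which the choice of g forbids. *)

Lemma card_cent1_bij (gT hT : finGroupType) (f : gT -> hT) (x : gT) (y : hT) :
  bijective f -> (forall g, (g \in 'C[x]) = (f g \in 'C[y])) ->
  #|'C[x]| = #|'C[y]|.
Proof.
move=> bij_f f_cent; have -> : 'C[x] = f @^-1: 'C[y].
  by apply/setP => g; rewrite f_cent [RHS]inE.
by rewrite on_card_preimset //; apply: onW_bij.
Qed.

Lemma exists_cent1_mismatch (gT hT : finGroupType) (f : gT -> hT)
    (x : gT) (y : hT) :
  bijective f -> #|'C[x]| <> #|'C[y]| ->
  exists g, (g \in 'C[x]) != (f g \in 'C[y]).
Proof.
move=> bij_f neq_card; apply/existsP; apply: contraT => /existsPn f_cent.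
by case: neq_card; apply: card_cent1_bij bij_f _ => g; apply/eqP/negPn.
Qed.

Lemma exists_two_other (T : finType) (i : T) :
  2 < #|T| -> exists j t : T, [/\ j != i, t != i & t != j].
Proof.
move=> card_T.
have [j] : exists j, j \in [set~ i].
  by apply/card_gt0P; rewrite cardsC1 -ltnS (ltn_predK card_T) ltnW.
rewrite !inE => ji.
have [t] : exists t, t \in ~: [set i; j].
  by apply/card_gt0P; rewrite cardsCs setCK cards2 eq_sym ji subn_gt0.
by rewrite !inE negb_or => /andP[ti tj]; exists j, t.
Qed.

Section Configurations.

Variables (gT hT : finGroupType) (k : nat).
Implicit Types (c : config gT hT k) (i j : 'I_k) (p : gT * hT).

Lemma place_same c i p : place c i p i = Some p.
Proof. by rewrite /place eqxx. Qed.

Lemma place_other c i j p : i != j -> place c i p j = c j.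
Proof. by rewrite /place eq_sym => /negbTE ->. Qed.

Lemma marked_equiv_cent1 c i j t a b (d : hT) :
  marked_equiv c ->
  c i = Some a -> c j = Some b -> c t = Some (a.1 * b.1, d) ->
  (b.1 \in 'C[a.1]) = (b.2 \in 'C[a.2]).
Proof.
move=> equiv_c ci cj ct.
have [_ [/(_ erefl) /= prod_ab _]] := equiv_c i j t _ _ _ ci cj ct.
have [_ /= prod_ba] := equiv_c j i t _ _ _ cj ci ct.
by rewrite !cent1E prod_ab; apply/eqP/eqP => /prod_ba.
Qed.

End Configurations.

Theorem lemma4p13 (gT hT : finGroupType) (k : nat) (hk : 3 <= k)
  (c : config gT hT k) (i : 'I_k) (f : gT -> hT) (bij_f : bijective f)
  (x : gT) (hx : #|('C[x])%g| <> #|('C[f x])%g|) :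
  exists g : gT, spoiler_wins 2 (place c i (g, f g)).
Proof.
have [j [t [ji ti tj]]] : exists j t : 'I_k, [/\ j != i, t != i & t != j].
  by apply: exists_two_other; rewrite card_ord.
exists x; right; exists j => f' bij_f'.
have [g mismatch_g] := exists_cent1_mismatch bij_f' hx.
exists g; right; exists t => f'' _.
exists (x * g); left => equiv_c.
move: mismatch_g.
rewrite (@marked_equiv_cent1 _ _ _ _ i j t (x, f x) (g, f' g) (f'' (x * g))
  equiv_c) ?eqxx //.
- by rewrite 2?place_other // place_same.
- by rewrite place_other // place_same.
- by rewrite place_same.
Qed.
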